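(* Let $\mathbb{K}$ be an algebraically closed field of characteristic zero, $Y$ an irreducible affine variety and $X=Y\times\mathbb{A}^1$. Let $V\subseteq Y$ be a nonempty closed rigid subset such that $V\times\mathbb{A}^1\subseteq X$ is $\mathrm{SAut}(X)$-invariant. Then $Y$ is of type B or C, i.e. $\mathrm{HD}^*(X)\neq\mathbb{K}[X]$.
   Context: A derivation is locally nilpotent (LND) if every element is killed by some power of it; a closed subset $V$ is rigid if its coordinate ring $\mathbb{K}[V]$ admits no nonzero LND. Each LND $\partial$ of $\mathbb{K}[X]$ defines a $\mathbb{G}_a$-subgroup $\{\exp(s\partial)\}$ of $\mathrm{Aut}(X)$; $\mathrm{SAut}(X)$ is the subgroup generated by all of them. A slice of an LND $\partial$ is $s$ with $\partial(s)=1$; $\mathrm{HD}^*(X)$ is the subalgebra of $\mathbb{K}[X]$ generated by kernels of all LNDs of $\mathbb{K}[X]$ having a slice. $Y$ is of type A if $\mathrm{HD}^*(X)=\mathbb{K}[X]$, type B if $\mathrm{HD}^*(X)$ is not finitely generated, type C if $Y$ is rigid and $\mathrm{HD}^*(X)=\mathbb{K}[Y]$; every $Y$ has exactly one type. *)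

From HB Require Import structures.
From mathcomp Require Import all_boot all_order all_algebra all_field.
Set Implicit Arguments. Unset Strict Implicit. Unset Printing Implicit Defensive.
Import Order.TTheory GRing.Theory Num.Theory.
Local Open Scope ring_scope.

Section Defs.
Variables (K : fieldType) (B : comRingType) (iota : K -> B).

Definition is_Kder (D : B -> B) : Prop :=
  [/\ forall f g, D (f + g) = D f + D g,
      forall f g, D (f * g) = f * D g + g * D f
    & forall c, D (iota c) = 0].

Definition is_LND (D : B -> B) : Prop :=
  is_Kder D /\ forall f, exists n, iter n D f = 0.

Definition has_slice (D : B -> B) : Prop := exists s, D s = 1.

Inductive gen_subalg (S : B -> Prop) : B -> Prop :=
  | gs_const c : gen_subalg S (iota c)
  | gs_gen f : S f -> gen_subalg S f
  | gs_add f g : gen_subalg S f -> gen_subalg S g -> gen_subalg S (f + g)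
  | gs_mul f g : gen_subalg S f -> gen_subalg S g -> gen_subalg S (f * g).

Definition fin_gen_alg : Prop :=
  exists s : seq B, forall f, gen_subalg (fun g => g \in s) f.

Definition HDstar (f : B) : Prop :=
  gen_subalg (fun g => exists D, [/\ is_LND D, has_slice D & D g = 0]) f.

(** exp(sD) f, computed as a finite sum up to any n with D^n f = 0. *)
Definition exp_sum (D : B -> B) (s : K) (f : B) (n : nat) : B :=
  \sum_(i < n) iota (s ^+ i / (i`!)%:R) * iter i D f.

(** The ideal J (of a closed subset) is SAut-invariant: stable under every
    automorphism exp(sD), D an LND, s in K (these generate SAut). *)
Definition SAut_invariant (J : B -> Prop) : Prop :=
  forall D, is_LND D -> forall (s : K) f, J f ->
    forall n, iter n D f = 0 -> J (exp_sum D s f n).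

Definition radical_ideal (I : B -> Prop) : Prop :=
  [/\ I 0, (forall a b, I a -> I b -> I (a + b)),
      (forall a b, I b -> I (a * b))
    & forall a n, I (a ^+ n) -> I a].

(** A map D : B -> B representing (as a lift) a locally nilpotent
    K-derivation of the quotient B / I. *)
Definition is_LND_mod (I : B -> Prop) (D : B -> B) : Prop :=
  [/\ forall a, I a -> I (D a),
      forall a b, I (D (a + b) - (D a + D b)),
      forall a b, I (D (a * b) - (a * D b + b * D a)),
      forall c, I (D (iota c))
    & forall a, exists n, I (iter n D a)].

(** The closed subset with (radical) ideal I is rigid: B/I has no nonzero LND. *)
Definition rigid_quot (I : B -> Prop) : Prop :=
  ~ exists D, is_LND_mod I D /\ exists a, ~ I (D a).

End Defs.

Definition polyC_emb (K : fieldType) (A : comRingType) (iota : K -> A)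
  : K -> {poly A} := fun c => (iota c)%:P.

(** ideal of V x A^1 in K[Y][t], where I is the ideal of V in K[Y] *)
Definition coef_ideal (A : comRingType) (I : A -> Prop) : {poly A} -> Prop :=
  fun p => forall i, I p`_i.

(* Write [A = K[Y]], [I] for the ideal of [V] and [R = A / I], a reduced, finitely generated
   and rigid algebra.  As [I[t]] is stable under every [exp (s D)], a Vandermonde argument
   shows that every LND [D] of [A[t]] maps [I[t]] into itself, hence induces an LND [E] of
   [R[t]].  Such an [E] kills [R]: if [E] raises degrees by at most [d], its homogeneous
   component of degree [d] is [t^d (e + c t d/dt)] and is again locally nilpotent; rigidity
   forces [e = 0], and [c = 0] because [c] is nilpotent when [d = 0], while for [d > 0] the
   exponential of the component sends [t] to [t u] with [u] a unit of [R[t]], hence a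
   constant.  So [d] can be lowered until [E] vanishes on [R], i.e. [E p = p' E(t)].  If [D]
   has a slice then [E(t)] is a unit, so [ker D], and with it [HD*(X)], maps into [R]; since
   [t] does not, [HD*(X) <> K[X]]. *)

From HB Require Import structures.
From mathcomp Require Import all_boot all_order all_algebra all_field.
From mathcomp Require Import zify ring boolp.
Import GRing.Theory.
Local Open Scope ring_scope.

Section Derivation.
Context {K : fieldType} {B : comNzRingType} {iota : K -> B} {D : B -> B}.
Hypothesis Dder : is_Kder iota D.

Lemma derD f g : D (f + g) = D f + D g. Proof. by case: Dder. Qed.
Lemma derM f g : D (f * g) = f * D g + g * D f. Proof. by case: Dder. Qed.
Lemma derC k : D (iota k) = 0. Proof. by case: Dder. Qed.

Lemma der0 : D 0 = 0.
Proof. by apply: (addrI (D 0)); rewrite -derD !addr0. Qed.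

Lemma derN f : D (- f) = - D f.
Proof. by apply/eqP; rewrite -subr_eq0 opprK -derD addNr der0. Qed.

Lemma derB f g : D (f - g) = D f - D g.
Proof. by rewrite derD derN. Qed.

Lemma derMn f n : D (f *+ n) = D f *+ n.
Proof. by elim: n => [|n IH]; rewrite ?mulr0n ?der0 // !mulrS derD IH. Qed.

Lemma der_sum I r P (g : I -> B) :
  D (\sum_(i <- r | P i) g i) = \sum_(i <- r | P i) D (g i).
Proof. exact: (big_morph D derD der0). Qed.

Lemma derX f n : D (f ^+ n.+1) = (D f * f ^+ n) *+ n.+1.
Proof.
elim: n => [|n IH]; first by rewrite expr1 expr0 mulr1.
by rewrite exprSr derM IH exprS; ring.
Qed.

Lemma derCM k f : D (iota k * f) = iota k * D f.
Proof. by rewrite derM derC mulr0 addr0. Qed.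

Lemma iter_derD n f g : iter n D (f + g) = iter n D f + iter n D g.
Proof. by elim: n => //= n ->; rewrite derD. Qed.

Lemma iter_der0 n : iter n D 0 = 0.
Proof. by elim: n => //= n ->; rewrite der0. Qed.

Lemma iter_der_eq0 [n m : nat] [f : B] : iter n D f = 0 -> (n <= m)%N -> iter m D f = 0.
Proof. by move=> fn0 /subnK <-; rewrite iterD fn0 iter_der0. Qed.

Lemma iter_derM n f g : iter n D (f * g) =
  \sum_(i < n.+1) (iter i D f * iter (n - i) D g) *+ 'C(n, i).
Proof.
elim: n => [|n IH]; first by rewrite big_ord1 /= mulr1n.
rewrite [LHS]/= IH der_sum.
under eq_bigr do rewrite derMn derM mulrnDl.
rewrite big_split /= [in RHS]big_ord_recl bin0 mulr1n.
under [in RHS]eq_bigr => i _ do rewrite lift0 binS mulrnDr subSS.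
rewrite [in RHS]big_split /= addrA; congr (_ + _); last first.
  by apply: eq_bigr => i _; rewrite mulrC.
rewrite big_ord_recl /= subn0 bin0 mulr1n; congr (_ + _).
rewrite [in RHS]big_ord_recr /= bin_small // mulr0n addr0.
apply: eq_bigr => i _; rewrite /bump /= !add0n add1n.
by rewrite -[in RHS]subSS [in RHS]subSn.
Qed.

Lemma locally_nilpotent_sum I (r : seq I) (g : I -> B) :
  (forall i, exists n, iter n D (g i) = 0) ->
  exists n, iter n D (\sum_(i <- r) g i) = 0.
Proof.
move=> gLN; elim: r => [|i r [n IH]]; first by exists 0%N; rewrite big_nil.
have [m gm] := gLN i; exists (m + n)%N.
rewrite big_cons iter_derD (iter_der_eq0 gm (leq_addr _ _)).
by rewrite (iter_der_eq0 IH (leq_addl _ _)) addr0.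
Qed.

End Derivation.

Lemma map_poly_Kder {K : fieldType} {R : comNzRingType} {iota : K -> R} {D : R -> R} :
  is_Kder iota D -> is_Kder (polyC_emb iota) (map_poly D).
Proof.
move=> Dder; have D0 := der0 Dder.
split=> [f g|f g|k]; apply/polyP => i; rewrite ?coefD !coef_map_id0 //.
- by rewrite coefD (derD Dder).
- rewrite coefM (der_sum Dder) coefM coefMr -big_split /=; apply: eq_bigr => j _.
  by rewrite (derM Dder) !coef_map_id0.
- by rewrite coefC coef0; case: (i == 0)%N; rewrite ?(derC Dder).
Qed.

Lemma der_poly_deriv {K : fieldType} {R : comNzRingType} {iota : K -> {poly R}}
    {D : {poly R} -> {poly R}} :
  is_Kder iota D -> (forall r, D r%:P = 0) -> forall p, D p = p^`() * D 'X.
Proof.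
move=> Dder DC; elim/poly_ind => [|p r IH]; first by rewrite deriv0 mul0r (der0 Dder).
by rewrite (derD Dder) (derM Dder) DC IH derivMXaddC; ring.
Qed.

Section DerivationPolynomial.
Context {K : fieldType} {B : comNzRingType} {iota : {rmorphism K -> B}}.
Context {D : B -> B} (Dder : is_Kder iota D).

Definition poly_op (P : {poly K}) f := \sum_(i < size P) iota P`_i * iter i D f.

Lemma poly_op_widen (P : {poly K}) n f : (size P <= n)%N ->
  poly_op P f = \sum_(i < n) iota P`_i * iter i D f.
Proof.
move=> lePn; rewrite /poly_op (big_ord_widen n (fun i => iota P`_i * iter i D f)) //.
rewrite big_mkcond /=; apply: eq_bigr => i _; case: ltnP => // leP.
by rewrite nth_default // rmorph0 mul0r.
Qed.

Lemma poly_op0 f : poly_op 0 f = 0.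
Proof. by rewrite /poly_op size_poly0 big_ord0. Qed.

Lemma poly_op1 f : poly_op 1 f = f.
Proof. by rewrite /poly_op size_poly1 big_ord1 coefC /= rmorph1 mul1r. Qed.

Lemma poly_opD (P Q : {poly K}) f : poly_op (P + Q) f = poly_op P f + poly_op Q f.
Proof.
pose n := maxn (size P) (size Q).
rewrite !(poly_op_widen _ n) ?leq_maxl ?leq_maxr ?size_polyD // -big_split /=.
by apply: eq_bigr => i _; rewrite coefD rmorphD mulrDl.
Qed.

Lemma poly_opCM k (Q : {poly K}) f : poly_op (k%:P * Q) f = iota k * poly_op Q f.
Proof.
rewrite !(poly_op_widen _ (size Q)) // ?mul_polyC ?size_scale_leq // big_distrr /=.
by apply: eq_bigr => i _; rewrite coefZ rmorphM mulrA.
Qed.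

Lemma poly_opMX (P : {poly K}) f : poly_op (P * 'X) f = poly_op P (D f).
Proof.
rewrite (poly_op_widen _ (size P).+1); last first.
  by apply: leq_trans (size_polyMleq _ _) _; rewrite size_polyX addn2.
rewrite big_ord_recl coefMX /= rmorph0 mul0r add0r /poly_op.
by apply: eq_bigr => i _; rewrite coefMX /= add0n -iterS iterSr.
Qed.

Lemma der_poly_op (P : {poly K}) f : D (poly_op P f) = poly_op P (D f).
Proof.
rewrite (der_sum Dder); apply: eq_bigr => i _.
by rewrite (derCM Dder) -iterSr.
Qed.

Lemma poly_opM (P Q : {poly K}) f : poly_op (P * Q) f = poly_op P (poly_op Q f).
Proof.
elim/poly_ind: P Q => [|P k IH] Q; first by rewrite mul0r !poly_op0.
rewrite mulrDl poly_opD -mulrA IH poly_opCM poly_opD poly_opMX.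
rewrite -[k%:P]mulr1 poly_opCM poly_op1 mulrC poly_opMX.
by rewrite der_poly_op.
Qed.

Lemma poly_op_id [P : {poly K}] [N : nat] [f : B] : iter N D f = 0 ->
  (forall k, (k < N)%N -> P`_k = (k == 0%N)%:R) -> poly_op P f = f.
Proof.
move=> fN0 P1; case: N fN0 P1 => [/= -> _|N fN0 P1].
  by rewrite /poly_op big1 // => i _; rewrite (iter_der0 Dder) mulr0.
rewrite (poly_op_widen _ (maxn (size P) N).+1) ?leqW ?leq_maxl //.
rewrite big_ord_recl P1 //= rmorph1 mul1r big1 ?addr0 // => i _.
rewrite /bump /= add1n; case: (ltnP i.+1 N.+1) => [lt|ge].
  by rewrite P1 // rmorph0 mul0r.
by rewrite -iterS (iter_der_eq0 Dder fN0 ge) mulr0.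
Qed.

Hypothesis K0 : [pchar K] =i pred0.

Definition exp_poly (s : K) N : {poly K} := \poly_(i < N) (s ^+ i / (i`!)%:R).

Lemma coef_exp_poly s N k : (k < N)%N -> (exp_poly s N)`_k = s ^+ k / (k`!)%:R.
Proof. by move=> ltkN; rewrite coef_poly ltkN. Qed.

Lemma poly_op_exp s N f : poly_op (exp_poly s N) f = exp_sum iota D s f N.
Proof.
rewrite (poly_op_widen _ N) ?size_poly //.
by apply: eq_bigr => i _; rewrite coef_exp_poly.
Qed.

Lemma exp_coefM (s : K) j k : (j <= k)%N ->
  s ^+ j / (j`!)%:R * (s ^+ (k - j) / ((k - j)`!)%:R) =
  s ^+ k / (k`!)%:R * ('C(k, j))%:R.
Proof.
move=> lejk; have nat_neq0 n : (0 < n)%N -> n%:R != 0 :> K.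
  by rewrite (pcharf0P K).1 // -lt0n.
have kfact : (k`!)%:R = ('C(k, j))%:R * ((j`!)%:R * ((k - j)`!)%:R) :> K.
  by rewrite -!natrM bin_fact.
rewrite -{3}(subnKC lejk) exprD kfact.
by field; rewrite !nat_neq0 ?fact_gt0 ?bin_gt0.
Qed.

Lemma coef_exp_polyNM s N k : (k < N)%N ->
  (exp_poly (- s) N * exp_poly s N)`_k = (k == 0%N)%:R.
Proof.
move=> ltkN; rewrite coefM.
transitivity (s ^+ k / (k`!)%:R * (1 + -1) ^+ k); last first.
  by case: k ltkN => [|k] _; rewrite ?expr0 ?fact0 ?divr1 ?mulr1 // addrN expr0n mulr0.
rewrite exprDn big_distrr /=; apply: eq_bigr => j _.
have lejk : (j <= k)%N by rewrite -ltnS.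
rewrite !coef_exp_poly; [|lia|lia].
rewrite expr1n mul1r exprNn.
transitivity ((-1) ^+ j * (s ^+ j / (j`!)%:R * (s ^+ (k - j) / ((k - j)`!)%:R))).
  by rewrite !mulrA.
by rewrite exp_coefM //; ring.
Qed.

Lemma exp_sumK s [M N : nat] [f : B] : iter M D f = 0 -> (M <= N)%N ->
  exp_sum iota D (- s) (exp_sum iota D s f N) N = f.
Proof.
move=> fM0 leMN; rewrite -!poly_op_exp -poly_opM.
apply: (poly_op_id (iter_der_eq0 Dder fM0 leMN)) => k ltkN.
exact: coef_exp_polyNM.
Qed.

Lemma exp_sumM s [N1 N2 N : nat] [f g : B] : iter N1 D f = 0 -> iter N2 D g = 0 ->
  (N1 + N2 <= N)%N ->
  exp_sum iota D s (f * g) N = exp_sum iota D s f N * exp_sum iota D s g N.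
Proof.
move=> fN0 gN0 leN.
pose a i := iota (s ^+ i / (i`!)%:R).
pose gen h : {poly B} := \poly_(i < N) (a i * iter i D h).
have exp_gen h : exp_sum iota D s h N = (gen h).[1].
  rewrite (horner_coef_wide _ (size_poly _ _)).
  by apply: eq_bigr => i _; rewrite coef_poly ltn_ord expr1n mulr1.
rewrite (exp_gen f) (exp_gen g) -hornerM (horner_coef_wide (n := N + N)); last first.
  apply: leq_trans (size_polyMleq _ _) _.
  by rewrite (leq_trans (leq_pred _)) // leq_add // size_poly.
rewrite big_split_ord /= [X in _ = _ + X]big1 ?addr0; last first.
  move=> i _; rewrite coefM big1 ?mul0r // => j _; rewrite !coef_poly.
  case: (ltnP j N) => ltjN; last by rewrite mul0r.
  case: (ltnP (N + i - j) N) => ltN; last by rewrite mulr0.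
  have [leN1|leN2] : (N1 <= j)%N \/ (N2 <= N + i - j)%N by lia.
    by rewrite (iter_der_eq0 Dder fN0 leN1) mulr0 mul0r.
  by rewrite (iter_der_eq0 Dder gN0 leN2) !mulr0.
rewrite /exp_sum; under [RHS]eq_bigr do rewrite expr1n mulr1.
apply: eq_bigr => i _; rewrite coefM (iter_derM Dder) mulr_sumr; apply: eq_bigr => j _.
have leji : (j <= i)%N by rewrite -ltnS.
have ltiN := ltn_ord i.
rewrite !coef_poly (_ : (j < N)%N) 1?(_ : (i - j < N)%N); try lia.
have aM : a j * a (i - j)%N = a i * ('C(i, j))%:R.
  by rewrite -(rmorph_nat iota) -!rmorphM exp_coefM.
rewrite -/(a i); transitivity (a i * ('C(i, j))%:R * (iter j D f * iter (i - j) D g)).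
  by ring.
by rewrite -aM; ring.
Qed.

End DerivationPolynomial.

Section Vandermonde.
Context {K : fieldType} {B : comNzRingType} {iota : {rmorphism K -> B}}.
Hypothesis K0 : [pchar K] =i pred0.
Variable J : B -> Prop.
Hypothesis J0 : J 0.
Hypothesis JD : forall x y, J x -> J y -> J (x + y).
Hypothesis JZ : forall k x, J x -> J (iota k * x).

Lemma vandermonde_mem n (a : nat -> B) :
  (forall s : K, J (\sum_(i < n) iota (s ^+ i) * a i)) ->
  forall i, (i < n)%N -> J (a i).
Proof.
elim: n a => [//|n IH] a aJ i ltin.
have pow2_neq i' : (i' < n)%N -> (2 : K) ^+ i' - 2 ^+ n != 0.
  move=> ltn; rewrite -!natrX -opprB -natrB; last by rewrite leq_exp2l // ltnW.
  by rewrite oppr_eq0 (pcharf0P K).1 // subn_eq0 -ltnNge ltn_exp2l.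
(* The relation at [2 s] minus [2 ^ n] times the relation at [s] has no term of degree [n] *)
have lowJ : forall j, (j < n)%N -> J (iota (2 ^+ j - 2 ^+ n) * a j).
  apply: IH => s.
  have := JD _ _ (aJ (2 * s)) (JZ (- (2 ^+ n)) _ (aJ s)).
  rewrite big_ord_recr /= [X in J (_ + (_ * X))]big_ord_recr /=.
  rewrite mulrDr !mulrA -rmorphM addrACA.
  rewrite (_ : iota ((2 * s) ^+ n) * a n + iota (- 2 ^+ n * s ^+ n) * a n = 0).
    rewrite addr0 mulr_sumr -big_split /=.
    congr J; apply: eq_bigr => j _; rewrite !mulrA -!rmorphM -mulrDl -rmorphD.
    by congr (iota _ * _); rewrite exprMn mulNr; ring.
  by rewrite -mulrDl -rmorphD exprMn mulNr addrN rmorph0 mul0r.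
have {}lowJ j : (j < n)%N -> J (a j).
  move=> ltjn; have := JZ (2 ^+ j - 2 ^+ n)^-1 _ (lowJ j ltjn).
  by rewrite mulrA -rmorphM mulVf ?pow2_neq // rmorph1 mul1r.
have [//|geni] := ltnP i n; first exact: lowJ.
have -> : i = n by lia.
have sumJ : J (\sum_(j < n) iota (-1) * a j).
  by elim/big_ind: _ => // j _; apply: JZ; apply: lowJ.
have := JD _ _ (aJ 1) sumJ; rewrite big_ord_recr /= expr1n rmorph1 mul1r.
under [X in J (_ + X)]eq_bigr do rewrite rmorphN1 mulN1r.
under eq_bigr do rewrite expr1n rmorph1 mul1r.
by rewrite sumrN addrAC subrr add0r.
Qed.

End Vandermonde.

Lemma size_unit_poly_reduced (R : comNzRingType) (p q : {poly R}) :
  (forall (x : R) n, x ^+ n = 0 -> x = 0) -> p * q = 1 -> (size p <= 1)%N.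
Proof.
move=> Rred pq1; rewrite leqNgt; apply/negP => lt1p.
set a := lead_coef p.
have a_neq0 : a != 0 by rewrite lead_coef_eq0 -size_poly_eq0; lia.
set q' := a%:P * q.
have pq' : p * q' = a%:P by rewrite /q' mulrCA pq1 mulr1.
suff q'0 : q' = 0 by move: pq'; rewrite q'0 mulr0 => /esym/eqP; rewrite polyC_eq0 (negbTE a_neq0).
apply/eqP/negPn/negP => q'_neq0.
have lt0q' : (0 < size q')%N by rewrite size_poly_gt0.
set b := a * q`_(size q').-1.
have lead_q' : lead_coef q' = b by rewrite lead_coefE /q' coefCM.
(* [p * q'] is constant, so its coefficient of degree [deg p + deg q' > 0] vanishes *)
have pb0 : a * b = 0.
  have := mul_lead_coef p q'; rewrite pq' coefC lead_q'.
  by have -> : ((size p + size q').-2 == 0%N) = false by apply/negbTE; lia.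
have b0 : b = 0.
  by apply: (Rred _ 2); rewrite expr2 {1}/b mulrAC pb0 mul0r.
by move: q'_neq0; rewrite -lead_coef_eq0 lead_q' b0 eqxx.
Qed.

Lemma size_poly_leq_of_top0 (R : nzRingType) (p : {poly R}) n :
  (size p <= n.+1)%N -> p`_n = 0 -> (size p <= n)%N.
Proof.
move=> sp pn0; apply/leq_sizeP => j; rewrite leq_eqVlt => /orP [/eqP <- // | ltnj].
exact: (leq_sizeP _ _ sp).
Qed.

Section RigidCoefficients.
Context {K : fieldType} {R : comNzRingType} {phi : {rmorphism K -> R}}.
Hypothesis K0 : [pchar K] =i pred0.
Hypothesis Rred : forall (x : R) n, x ^+ n = 0 -> x = 0.
Hypothesis Rrigid : forall e : R -> R, is_LND phi e -> forall a, e a = 0.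
Hypothesis Rfg : fin_gen_alg phi.
Variable E : {poly R} -> {poly R}.
Hypothesis ELND : is_LND (polyC_emb phi) E.

Let Eder : is_Kder (polyC_emb phi) E := ELND.1.
Let EC k : E (phi k)%:P = 0 := derC Eder k.

Lemma size_E_polyC_bounded : exists M, forall r, (size (E r%:P) <= M)%N.
Proof.
have [s sgen] := Rfg; exists (\max_(g <- s) size (E g%:P))%N => r.
elim: (sgen r) => {r} [k|g gs|f g _ IHf _ IHg|f g _ IHf _ IHg].
- by rewrite EC size_poly0.
- exact: leq_bigmax_seq.
- rewrite polyCD (derD Eder); apply: leq_trans (size_polyD _ _) _.
  by rewrite geq_max IHf IHg.
- rewrite polyCM (derM Eder); apply: leq_trans (size_polyD _ _) _.
  by rewrite !mul_polyC geq_max !(leq_trans (size_scale_leq _ _)).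
Qed.

(* Sizes are degrees plus one: [E] sends constants to degree [<= d] and [t] to degree [<= d + 1]. *)
Definition raises_deg_le d :=
  (forall r, (size (E r%:P) <= d.+1)%N) /\ (size (E 'X) <= d.+2)%N.

Section TopComponent.
Variable d : nat.
Hypothesis Ed : raises_deg_le d.

Definition etop r := (E r%:P)`_d.
Definition ctop := (E 'X)`_d.+1.

Lemma etop_der : is_Kder phi etop.
Proof.
split=> [a b|a b|k]; rewrite /etop ?polyCD ?polyCM ?(derD Eder) ?(derM Eder).
- by rewrite coefD.
- by rewrite coefD !coefCM.
- by rewrite EC coef0.
Qed.

Let etop0 : etop 0 = 0 := der0 etop_der.

Lemma size_coef_E_top [m : nat] [h : {poly R}] : (size h <= m.+1)%N ->
  (size (E h) <= (m + d).+1)%N /\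
  (E h)`_(m + d) = etop h`_m + (m%:R * ctop) * h`_m.
Proof.
have [EdC EdX] := Ed.
elim: m h => [|m IH] h sh.
  by rewrite [h]size1_polyC // coefC /= !mul0r addr0; split.
set b := h`_m.+1; set h' := h - b%:P * 'X^(m.+1).
have -> : h = b%:P * 'X^(m.+1) + h' by rewrite addrC subrK.
have sh' : (size h' <= m.+1)%N.
  apply/leq_sizeP => j ltj; rewrite coefB coefCM coefXn.
  case: (ltngtP j m.+1) => [|ltmj|->]; first by lia.
    by rewrite mulr0 subr0; apply: (leq_sizeP _ _ sh).
  by rewrite mulr1 subrr.
have [IH1 IH2] := IH _ sh'.
rewrite (derD Eder) (derM Eder) (derX Eder); split.
  apply: leq_trans (size_polyD _ _) _; rewrite geq_max (leq_trans IH1) ?andbT; last by lia.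
  apply: leq_trans (size_polyD _ _) _; rewrite geq_max; apply/andP; split.
    rewrite mul_polyC (leq_trans (size_scale_leq _ _)) //.
    have size_Mn (p : {poly R}) n : (size (p *+ n) <= size p)%N.
      by apply/leq_sizeP => j lej; rewrite coefMn nth_default // mul0rn.
    apply: leq_trans (size_Mn _ _) _; apply: leq_trans (size_polyMleq _ _) _.
    by rewrite size_polyXn; lia.
  rewrite mulrC (leq_trans (size_polyMleq _ _)) // size_polyXn.
  by have := EdC b; lia.
rewrite !coefD (leq_sizeP _ _ IH1) ?addr0; last by lia.
rewrite coefCM coefMn coefMXn [in X in _ + X]mulrC coefMXn.
have -> : (m.+1 + d < m)%N = false by lia.
have -> : (m.+1 + d < m.+1)%N = false by lia.
have -> : (m.+1 + d - m = d.+1)%N by lia.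
have -> : (m.+1 + d - m.+1 = d)%N by lia.
rewrite /etop /ctop -[_ *+ m.+1]mulr_natl; ring.
Qed.

Fixpoint top_seq (k : nat) (b : R) (n : nat) : R :=
  if n is n'.+1 then etop (top_seq k b n') + ((k + n' * d)%:R * ctop) * top_seq k b n'
  else b.

Lemma size_coef_iter_E_top k (b : R) n :
  (size (iter n E (b%:P * 'X^k)%R) <= (k + n * d).+1)%N /\
  (iter n E (b%:P * 'X^k))`_(k + n * d) = top_seq k b n.
Proof.
elim: n => [|n [IH1 IH2]] /=.
  rewrite mul0n addn0 coefCM coefXn eqxx mulr1; split => //.
  by rewrite mul_polyC (leq_trans (size_scale_leq _ _)) // size_polyXn.
have [T1 T2] := size_coef_E_top IH1.
have -> : (k + n.+1 * d = k + n * d + d)%N by rewrite mulSn; lia.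
by split => //; rewrite T2 IH2.
Qed.

Lemma top_seq_nilpotent k (b : R) : exists n, top_seq k b n = 0.
Proof.
have [n En] := ELND.2 (b%:P * 'X^k); exists n.
by have [_ <-] := size_coef_iter_E_top k b n; rewrite En coef0.
Qed.

Lemma top_seq_eq0 [k : nat] [b : R] [n m : nat] :
  top_seq k b n = 0 -> (n <= m)%N -> top_seq k b m = 0.
Proof.
move=> tn0 /subnK <-; elim: (m - n)%N => [|j IH]; first by rewrite add0n.
by rewrite addSn /= IH etop0 mulr0 addr0.
Qed.

(* If [ctop = 0] or [d = 0] then [top_seq 0 a] is the orbit of [a] under [etop]. *)
Lemma etop_eq0_if : ctop = 0 \/ d = 0%N -> forall a, etop a = 0.
Proof.
move=> c0_d0; apply: Rrigid; split; first exact: etop_der.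
move=> a; have [n tn0] := top_seq_nilpotent 0 a; exists n; rewrite -tn0.
elim: n {tn0} => //= n ->.
by case: c0_d0 => ->; rewrite ?muln0 ?mulr0 ?mul0r ?addr0.
Qed.

Lemma ctop_eq0_deg0 : d = 0%N -> ctop = 0.
Proof.
move=> d0; have e0 := etop_eq0_if (or_intror d0).
have top_seqX n : top_seq 1 1 n = ctop ^+ n.
  by elim: n => //= n ->; rewrite e0 d0 muln0 addn0 add0r mul1r exprS.
by have [n tn0] := top_seq_nilpotent 1 1; apply: (Rred _ n); rewrite -top_seqX.
Qed.

(* The homogeneous component of [E] of degree [d] for the grading by [t]-degree. *)
Definition Etop f := 'X^d * (map_poly etop f + ctop%:P * ('X * f^`())).

Lemma Etop_der : is_Kder (polyC_emb phi) Etop.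
Proof.
have mapder := map_poly_Kder etop_der.
split=> [f g|f g|k]; rewrite /Etop.
- by rewrite (derD mapder) derivD; ring.
- by rewrite (derM mapder) derivM; ring.
- by rewrite (derC mapder) derivC !mulr0 addr0 mulr0.
Qed.

Lemma Etop_monomial k (b : R) :
  Etop (b%:P * 'X^k) = (etop b + (k%:R * ctop) * b)%:P * 'X^(k + d).
Proof.
have etop_map : map_poly etop (b%:P * 'X^k) = (etop b)%:P * 'X^k.
  apply/polyP => i; rewrite coef_map_id0 // !coefCM coefXn.
  by case: (i == k); rewrite ?mulr1 ?mulr0.
have euler : 'X * (b%:P * 'X^k)^`() = (b%:P * 'X^k) *+ k.
  rewrite derivM derivC mul0r add0r derivXn.
  case: (k) => [|k']; first by rewrite !mulr0n !mulr0.
  by rewrite /= !mulrnAr mulrCA -exprS.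
rewrite /Etop etop_map euler exprD !polyCD !polyCM -mulr_natl -polyC_natr.
ring.
Qed.

Lemma iter_Etop_monomial k (b : R) n :
  iter n Etop (b%:P * 'X^k) = (top_seq k b n)%:P * 'X^(k + n * d).
Proof.
elim: n => [|n IH] /=; first by rewrite mul0n addn0.
by rewrite IH Etop_monomial; congr (_ * 'X^_); rewrite mulSn; lia.
Qed.

Lemma Etop_LND : is_LND (polyC_emb phi) Etop.
Proof.
split; first exact: Etop_der.
move=> f; rewrite -[f]coefK poly_def; apply: (locally_nilpotent_sum Etop_der) => i.
have [n tn0] := top_seq_nilpotent i f`_i; exists n.
by rewrite -mul_polyC iter_Etop_monomial tn0 mul0r.
Qed.

Let phiP : {rmorphism K -> {poly R}} := polyC \o phi.

Definition exp_cofactor (s : K) M : {poly R} :=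
  \sum_(n < M) (phi (s ^+ n / (n`!)%:R) * top_seq 1 1 n)%:P * 'X^(n * d).

Lemma exp_sum_Etop_X s [M N : nat] : (forall n, (M <= n)%N -> top_seq 1 1 n = 0) ->
  (M <= N)%N -> exp_sum phiP Etop s 'X N = 'X * exp_cofactor s M.
Proof.
move=> tM leMN; rewrite /exp_sum /exp_cofactor mulr_sumr.
pose u n := 'X * ((phi (s ^+ n / (n`!)%:R) * top_seq 1 1 n)%:P * 'X^(n * d)).
rewrite (big_ord_widen N u) //.
rewrite [RHS]big_mkcond /=; apply: eq_bigr => i _; rewrite /u.
have := iter_Etop_monomial 1 1 i; rewrite polyC1 mul1r expr1 => ->.
case: ltnP => [_|leMi]; last by rewrite tM // !mul0r mulr0.
by rewrite polyCM exprD expr1; ring.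
Qed.

Lemma coef_exp_cofactor M : (0 < d)%N -> (1 < M)%N ->
  (exp_cofactor (-1) M)`_d = - ctop.
Proof.
move=> d_gt0 lt1M; rewrite coef_sum (bigD1 (Ordinal lt1M)) //= big1 ?addr0; last first.
  move=> i neqi1; rewrite coefCM coefXn.
  suff /negbTE -> : (d != i * d)%N by rewrite mulr0.
  apply: contra neqi1; rewrite -{1}[d]mul1n eqn_pmul2r // => /eqP i1.
  by apply/eqP/val_inj; rewrite /= -i1.
have etop1 : etop 1 = 0 by rewrite -(rmorph1 phi) (derC etop_der).
rewrite coefCM coefXn mul1n eqxx mulr1 /= etop1 add0r mul0n addn0 mul1r mulr1.
by rewrite expr1 divr1 rmorphN1 mulN1r.
Qed.

(* [exp Etop] maps [t] to [t * u] with [u = exp_cofactor 1 M]; applying [exp (- Etop)] and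
   cancelling [t] shows that [exp_cofactor (-1) M] is a unit of [R[t]], hence constant
   because [R] is reduced, while its coefficient of degree [d] is [- ctop]. *)
Lemma ctop_eq0_deg_gt0 : (0 < d)%N -> ctop = 0.
Proof.
move=> d_gt0; have Etop_der' : is_Kder phiP Etop := Etop_der.
have [M0 tM0] := top_seq_nilpotent 1 1; pose M := M0.+2.
have tM n : (M <= n)%N -> top_seq 1 1 n = 0.
  by move=> leMn; apply: (top_seq_eq0 tM0); rewrite /M in leMn; lia.
have [NX NX0] := Etop_LND.2 'X; have [N1 N10] := Etop_LND.2 (exp_cofactor 1 M).
pose N := (M + NX + N1)%N.
have leNX : (NX <= N)%N by rewrite /N; lia.
have := exp_sumK Etop_der' K0 1 NX0 leNX.
rewrite (exp_sum_Etop_X _ tM) ?(exp_sumM Etop_der' K0 _ NX0 N10); try by rewrite /N; lia.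
rewrite (exp_sum_Etop_X _ tM); last by rewrite /N; lia.
move=> XU; have unitU : exp_cofactor (-1) M * exp_sum phiP Etop (-1) (exp_cofactor 1 M) N = 1.
  by apply: (monic_lreg (monicX R)); rewrite mulr1 mulrA.
apply/eqP; rewrite -oppr_eq0 -(coef_exp_cofactor M) //; apply/eqP.
by rewrite nth_default // (leq_trans (size_unit_poly_reduced _ _ _ Rred unitU)).
Qed.

Lemma ctop_eq0 : ctop = 0.
Proof.
by case: (posnP d) => [d0|d_gt0]; [exact: ctop_eq0_deg0 | exact: ctop_eq0_deg_gt0].
Qed.

Lemma etop_eq0 a : etop a = 0.
Proof. by apply: etop_eq0_if; left; exact: ctop_eq0. Qed.

End TopComponent.

Lemma raises_deg_le_pred d : raises_deg_le d.+1 -> raises_deg_le d.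
Proof.
move=> Ed; have [EdC EdX] := Ed; split=> [r|].
  by apply: size_poly_leq_of_top0 (EdC r) _; exact: (etop_eq0 _ Ed r).
exact: size_poly_leq_of_top0 EdX (ctop_eq0 _ Ed).
Qed.

Lemma raises_deg_le0_polyC r : raises_deg_le 0 -> E r%:P = 0.
Proof.
move=> Ed; have [EdC _] := Ed.
by rewrite [E r%:P]size1_polyC ?EdC // -/(etop 0 r) (etop_eq0 _ Ed).
Qed.

Theorem rigid_LND_polyC_eq0 r : E r%:P = 0.
Proof.
have [M sizeM] := size_E_polyC_bounded.
suff E_deg d : raises_deg_le d -> E r%:P = 0.
  by apply: (E_deg (M + size (E 'X))%N); split=> [r'|]; [have := sizeM r'|]; lia.
elim: d => [|d IH] Ed; first exact: raises_deg_le0_polyC.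
exact/IH/raises_deg_le_pred.
Qed.
End RigidCoefficients.

Section QuotientByRadicalIdeal.
Local Open Scope quotient_scope.
Context {K : fieldType} {A : comNzRingType} {iota : {rmorphism K -> A}}.
Variable I : A -> Prop.
Hypothesis Irad : radical_ideal I.
Hypothesis I1 : ~ I 1.

Let I0 : I 0. Proof. by case: Irad. Qed.
Let ID a b : I a -> I b -> I (a + b). Proof. by case: Irad => _ ID _ _; exact: ID. Qed.
Let IM a b : I b -> I (a * b). Proof. by case: Irad => _ _ IM _; exact: IM. Qed.
Let IX a n : I (a ^+ n) -> I a. Proof. by case: Irad => _ _ _ IX; exact: IX. Qed.

Definition ideal_pred : {pred A} := fun a => `[< I a >].

Lemma ideal_pred_closed : idealr_closed ideal_pred.
Proof.
split; first exact/asboolP/I0.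
  by apply/negP => /asboolP.
by move=> a u v /asboolP Iu /asboolP Iv; apply/asboolP; exact: ID (IM _ _ Iu) Iv.
Qed.

HB.instance Definition _ := isIdealr.Build A ideal_pred ideal_pred_closed.

Definition quot := {ideal_quot ideal_pred}.
Definition quot_pi : {rmorphism A -> quot} := \pi_quot.
Definition quot_iota : {rmorphism K -> quot} := quot_pi \o iota.

Lemma quot_pi_eq0 a : quot_pi a = 0 <-> I a.
Proof.
have piE : (quot_pi a == 0) = `[< I a >].
  rewrite /quot_pi -[0 : quot](rmorph0 (\pi_quot : {rmorphism A -> quot})).
  by rewrite -(@Quotient.idealrBE _ ideal_pred) subr0.
split=> [pa0 | Ia]; first by apply/asboolP; rewrite -piE pa0.
by apply/eqP; rewrite piE; exact/asboolP.
Qed.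

Lemma quot_piK (x : quot) : quot_pi (repr x) = x.
Proof. exact: reprK. Qed.

Lemma quot_reduced (x : quot) n : x ^+ n = 0 -> x = 0.
Proof. by rewrite -(quot_piK x) -rmorphXn => /quot_pi_eq0 /IX /quot_pi_eq0. Qed.

Lemma quot_rigid : rigid_quot iota I ->
  forall e : quot -> quot, is_LND quot_iota e -> forall x, e x = 0.
Proof.
move=> Irigid e [eder eLN].
pose D a := repr (e (quot_pi a)).
have piD a : quot_pi (D a) = e (quot_pi a) by exact: quot_piK.
have iter_piD n a : quot_pi (iter n D a) = iter n e (quot_pi a).
  by elim: n a => [|n IH] a //=; rewrite piD IH.
have DLND : is_LND_mod iota I D.
  split=> [a Ia|a b|a b|k|a]; try apply/quot_pi_eq0.
  - by rewrite piD (quot_pi_eq0 a).2 // (der0 eder).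
  - by rewrite rmorphB rmorphD !piD rmorphD (derD eder) subrr.
  - by rewrite rmorphB rmorphD !rmorphM !piD rmorphM (derM eder) subrr.
  - by rewrite piD (derC eder).
  - have [n en] := eLN (quot_pi a); exists n.
    by apply/quot_pi_eq0; rewrite iter_piD en.
move=> x; rewrite -(quot_piK x) -piD; apply/quot_pi_eq0.
by case: (EM (I (D (repr x)))) => // nID; case: Irigid; exists D; split => //; exists (repr x).
Qed.

Lemma quot_fin_gen : fin_gen_alg iota -> fin_gen_alg quot_iota.
Proof.
move=> [s sgen]; exists (map quot_pi s) => x; rewrite -(quot_piK x).
elim: (sgen (repr x)) => {x} [k|g gs|f g _ IHf _ IHg|f g _ IHf _ IHg].
- exact: (gs_const _ _ k).
- by apply: gs_gen; exact: map_f.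
- by rewrite rmorphD; exact: gs_add.
- by rewrite rmorphM; exact: gs_mul.
Qed.

Lemma map_quot_pi_eq0 f : map_poly quot_pi f = 0 <-> coef_ideal I f.
Proof.
split=> [f0 i | fI]; last by apply/polyP => i; rewrite coef_map coef0; exact/quot_pi_eq0.
by apply/quot_pi_eq0; rewrite -coef_map f0 coef0.
Qed.

Definition lift (p : {poly quot}) : {poly A} := \poly_(i < size p) repr p`_i.

Lemma map_quot_pi_lift p : map_poly quot_pi (lift p) = p.
Proof.
apply/polyP => i; rewrite coef_map coef_poly.
by case: ltnP => [_|le] /=; rewrite ?quot_piK // (rmorph0 quot_pi) nth_default.
Qed.

Section InvariantRigidIdeal.
Hypothesis K0 : [pchar K] =i pred0.
Hypothesis Ifg : fin_gen_alg iota.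
Hypothesis Irigid : rigid_quot iota I.
Hypothesis Iinv : SAut_invariant (polyC_emb iota) (coef_ideal I).

(* The coefficients of [exp_sum D s f n] as a polynomial in [s] are the [D^i f / i!]. *)
Lemma LND_coef_ideal [D : {poly A} -> {poly A}] : is_LND (polyC_emb iota) D ->
  forall f, coef_ideal I f -> coef_ideal I (D f).
Proof.
move=> DLND f fI; have Dder := DLND.1; have [n Dn] := DLND.2 f.
have Dn2 : iter n.+2 D f = 0 by apply: (iter_der_eq0 Dder Dn); lia.
pose iotaP : {rmorphism K -> {poly A}} := polyC \o iota.
pose a i := iotaP (i`!%:R^-1) * iter i D f.
suff aI : forall i, (i < n.+2)%N -> coef_ideal I (a i).
  by have := aI 1%N isT; rewrite /a /= invr1 rmorph1 mul1r.
apply: (vandermonde_mem (iota := iotaP) K0) => [j|x y xI yI j|k x xI j|s].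
- by rewrite coef0.
- by rewrite coefD; exact: ID.
- by rewrite /= coefCM; exact: IM.
- have := Iinv _ DLND s _ fI _ Dn2; rewrite /exp_sum.
  by congr coef_ideal; apply: eq_bigr => i _; rewrite /a mulrA -rmorphM.
Qed.

Section SliceLND.
Variable D : {poly A} -> {poly A}.
Hypothesis DLND : is_LND (polyC_emb iota) D.

Let Dder := DLND.1.

Definition induced p := map_poly quot_pi (D (lift p)).

Lemma induced_map f : induced (map_poly quot_pi f) = map_poly quot_pi (D f).
Proof.
apply/eqP; rewrite -subr_eq0 -rmorphB -(derB Dder) /induced; apply/eqP.
apply/map_quot_pi_eq0; apply: (LND_coef_ideal DLND); apply/map_quot_pi_eq0.
by rewrite (raddfB (map_poly quot_pi)) /= map_quot_pi_lift subrr.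
Qed.

Lemma induced_LND : is_LND (polyC_emb quot_iota) induced.
Proof.
split; first split=> [p q|p q|k].
- rewrite -(map_quot_pi_lift p) -(map_quot_pi_lift q) -(rmorphD (map_poly quot_pi)).
  by rewrite !induced_map (derD Dder) (rmorphD (map_poly quot_pi)).
- rewrite -(map_quot_pi_lift p) -(map_quot_pi_lift q) -(rmorphM (map_poly quot_pi)).
  by rewrite !induced_map (derM Dder) (rmorphD (map_poly quot_pi)) !(rmorphM (map_poly quot_pi)).
- have -> : polyC_emb quot_iota k = map_poly quot_pi (polyC_emb iota k).
    by rewrite /polyC_emb map_polyC.
  by rewrite induced_map (derC Dder) rmorph0.
move=> p; have [n Dn] := DLND.2 (lift p); exists n.
suff -> : iter n induced p = map_poly quot_pi (iter n D (lift p)) by rewrite Dn rmorph0.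
by elim: n {Dn} => [|n IH] /=; rewrite ?map_quot_pi_lift // IH induced_map.
Qed.

Lemma induced_eq_deriv p : induced p = p^`() * induced 'X.
Proof.
apply: (der_poly_deriv induced_LND.1) => r.
exact: (rigid_LND_polyC_eq0 K0 quot_reduced (quot_rigid Irigid) (quot_fin_gen Ifg) _ induced_LND).
Qed.

Hypothesis Dslice : has_slice D.

(* The slice makes [induced 'X] a unit, so elements of [ker D] have derivative [0] in [(A/I)[t]]. *)
Lemma size_map_quot_pi_ker g : D g = 0 -> (size (map_poly quot_pi g) <= 1)%N.
Proof.
move=> Dg0; have [s Ds] := Dslice.
have s'X : (map_poly quot_pi s)^`() * induced 'X = 1.
  by rewrite -induced_eq_deriv induced_map Ds rmorph1.
have g'0 : (map_poly quot_pi g)^`() = 0.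
  have := induced_map g; rewrite Dg0 rmorph0 induced_eq_deriv => g'X.
  by rewrite -[LHS]mulr1 -s'X mulrCA g'X mulr0.
apply/leq_sizeP => -[//|i] _.
have := congr1 (fun p : {poly quot} => p`_i) g'0; rewrite /= coef_deriv coef0.
have inv_i1 : quot_iota (i.+1%:R)^-1 * i.+1%:R = 1.
  by rewrite -(rmorph_nat quot_iota) -rmorphM mulVf ?rmorph1 // (pcharf0P K).1.
by move=> gi0; rewrite -[LHS]mul1r -inv_i1 -mulrA mulr_natl gi0 mulr0.
Qed.

End SliceLND.

Lemma HDstar_map_const f : HDstar (polyC_emb iota) f -> (size (map_poly quot_pi f) <= 1)%N.
Proof.
elim=> {f} [k|g [D [DLND Dslice Dg0]]|f g _ IHf _ IHg|f g _ IHf _ IHg].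
- by rewrite /polyC_emb map_polyC size_polyC_leq1.
- exact: (size_map_quot_pi_ker _ DLND Dslice _ Dg0).
- rewrite rmorphD (leq_trans (size_polyD _ _)) //.
  by rewrite geq_max IHf IHg.
- rewrite rmorphM (leq_trans (size_polyMleq _ _)) //.
  by rewrite -subn1 leq_subLR (leq_add IHf IHg).
Qed.

End InvariantRigidIdeal.

End QuotientByRadicalIdeal.

Theorem corollary5 (K : closedFieldType) (hK : [pchar K] =i pred0)
  (A : idomainType) (iota : {rmorphism K -> A})
  (hfg : fin_gen_alg iota)
  (I : A -> Prop) (hI : radical_ideal I) (hne : ~ I 1)
  (hrig : rigid_quot iota I)
  (hinv : SAut_invariant (polyC_emb iota) (coef_ideal I)) :
  ~ (forall f : {poly A}, HDstar (polyC_emb iota) f).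
Proof.
move=> HD_all; have := HDstar_map_const _ hI hne hK hfg hrig hinv _ (HD_all 'X).
by rewrite map_polyX size_polyX.
Qed.
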